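(* Let $(X,d)$ be a metric space and $f:\ell_\infty(X)\to X$. The following are equivalent: (i) there is $q\in(0,1)$ with $L_{s,q}(f)<1$; (ii) there are $q\in(0,1)$ and $p\in[1,\infty)$ with $L_{p,q}(f)<(1-q)^{1/p}$; (iii) for every $q\in(0,1)$ there exists $p\in[1,\infty)$ with $L_{p,q}(f)<(1-q)^{1/p}$.
   Context: $\mathbb{N}^*=\{0,1,2,\dots\}$; $\ell_\infty(X)$ is the set of all bounded sequences $(x_n)_{n\in\mathbb{N}^*}$ in $X$. For $q\in(0,1]$, $d_{s,q}(x,y):=\sup\{q^n d(x_n,y_n):n\in\mathbb{N}^*\}$; for $q\in(0,1)$, $p\in[1,\infty)$, $d_{p,q}(x,y):=\left(\sum_{n=0}^\infty q^n d^p(x_n,y_n)\right)^{1/p}$. $L_{s,q}(f)$, $L_{p,q}(f)$ are the Lipschitz constants (possibly $\infty$) of $f$ with respect to $d_{s,q}$, resp. $d_{p,q}$, on $\ell_\infty(X)$ and $d$ on $X$. *)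

From Stdlib Require Export Reals.
Open Scope R_scope.

Definition is_metric {X : Type} (d : X -> X -> R) : Prop :=
  (forall x y, 0 <= d x y) /\
  (forall x y, d x y = 0 <-> x = y) /\
  (forall x y, d x y = d y x) /\
  (forall x y z, d x z <= d x y + d y z).

Definition bounded_seq {X : Type} (d : X -> X -> R) (x : nat -> X) : Prop :=
  exists M, forall n m, d (x n) (x m) <= M.

(* a^b for a >= 0, b > 0, with the convention 0^b = 0. *)
Definition rpow (a b : R) : R := if Rle_dec a 0 then 0 else Rpower a b.

(* Set {q^n d(x_n,y_n) : n}; d_{s,q}(x,y) is its supremum. *)
Definition dsq_set {X : Type} (d : X -> X -> R) (q : R) (x y : nat -> X) : R -> Prop :=
  fun r => exists n, r = q ^ n * d (x n) (y n).

Definition lip_s {X : Type} (d : X -> X -> R) (q : R) (f : (nat -> X) -> X) (L : R) : Prop :=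
  forall x y, bounded_seq d x -> bounded_seq d y ->
  forall s, is_lub (dsq_set d q x y) s -> d (f x) (f y) <= L * s.

Definition lip_p {X : Type} (d : X -> X -> R) (p q : R) (f : (nat -> X) -> X) (L : R) : Prop :=
  forall x y, bounded_seq d x -> bounded_seq d y ->
  forall S, infinite_sum (fun n => q ^ n * rpow (d (x n) (y n)) p) S ->
  d (f x) (f y) <= L * rpow S (1 / p).

(* Write d_n = d(x_n, y_n).  For q1 < 1 and a large integer N, (q1^n d_n)^N <= q^n d_n^N,
   so d_{s,q1} <= d_{N,q}; since L^N -> 0, a d_{s,q1}-contraction therefore has
   L_{N,q}(f) < (1-q)^(1/N) for every q.  Conversely, write q <= r t with t = q'^p and
   r < 1; then q^n d_n^p <= r^n (q'^n d_n)^p, so a geometric series gives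
   d_{p,q} <= d_{s,q'} / (1-r)^(1/p).  When L^p < 1-q, the numbers r and t < 1 can be
   chosen so that L < (1-r)^(1/p). *)

From Stdlib Require Import Reals Lra Lia.
Open Scope R_scope.

Lemma rpow_nonpos_l a b : a <= 0 -> rpow a b = 0.
Proof. intros Ha; unfold rpow; destruct (Rle_dec a 0); [reflexivity | contradiction]. Qed.

Lemma rpow_Rpower a b : 0 < a -> rpow a b = Rpower a b.
Proof. intros Ha; unfold rpow; destruct (Rle_dec a 0); [lra | reflexivity]. Qed.

Lemma rpow_ge_0 a b : 0 <= rpow a b.
Proof.
  unfold rpow; destruct (Rle_dec a 0); [lra | left; apply exp_pos].
Qed.

Lemma rpow_gt_0 a b : 0 < a -> 0 < rpow a b.
Proof. intros Ha; rewrite rpow_Rpower by exact Ha; apply exp_pos. Qed.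

Lemma rpow_1_l b : rpow 1 b = 1.
Proof.
  rewrite rpow_Rpower by lra; unfold Rpower.
  rewrite ln_1, Rmult_0_r; apply exp_0.
Qed.

Lemma rpow_1_r a : 0 <= a -> rpow a 1 = a.
Proof.
  intros [Ha | <-]; [rewrite rpow_Rpower by exact Ha; exact (Rpower_1 a Ha) |].
  apply rpow_nonpos_l; lra.
Qed.

Lemma rpow_rpow a b c : rpow (rpow a b) c = rpow a (b * c).
Proof.
  destruct (Rle_dec a 0) as [Ha | Ha].
  - rewrite !(rpow_nonpos_l a) by exact Ha; apply rpow_nonpos_l; lra.
  - rewrite (rpow_Rpower a b), !rpow_Rpower by (apply exp_pos || lra).
    apply Rpower_mult.
Qed.

Lemma rpow_rpow_inv a p : 0 <= a -> p <> 0 -> rpow (rpow a p) (1 / p) = a.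
Proof.
  intros Ha Hp; rewrite rpow_rpow.
  replace (p * (1 / p)) with 1 by (field; exact Hp); apply rpow_1_r, Ha.
Qed.

Lemma rpow_inv_rpow a p : 0 <= a -> p <> 0 -> rpow (rpow a (1 / p)) p = a.
Proof.
  intros Ha Hp; rewrite rpow_rpow.
  replace (1 / p * p) with 1 by (field; exact Hp); apply rpow_1_r, Ha.
Qed.

Lemma rpow_mult_distr a b c :
  0 <= a -> 0 <= b -> rpow (a * b) c = rpow a c * rpow b c.
Proof.
  intros [Ha | <-] [Hb | <-];
    try (rewrite ?Rmult_0_l, ?Rmult_0_r, !(rpow_nonpos_l 0) by lra; ring).
  rewrite !rpow_Rpower by (try apply Rmult_lt_0_compat; lra).
  symmetry; apply Rpower_mult_distr; assumption.
Qed.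

Lemma rpow_div_distr a b c :
  0 <= a -> 0 < b -> rpow (a / b) c = rpow a c / rpow b c.
Proof.
  intros Ha Hb; unfold Rdiv.
  rewrite rpow_mult_distr by (try (left; apply Rinv_0_lt_compat); lra).
  rewrite !(rpow_Rpower (/ b)), !(rpow_Rpower b) by (try apply Rinv_0_lt_compat; lra).
  unfold Rpower; rewrite ln_Rinv, <- exp_Ropp by exact Hb.
  f_equal; f_equal; ring.
Qed.

Lemma rpow_pow_l a n c : 0 <= a -> rpow (a ^ n) c = rpow a c ^ n.
Proof.
  intros Ha; induction n as [| n IH]; simpl; [apply rpow_1_l |].
  rewrite rpow_mult_distr, IH by (try apply pow_le; exact Ha); reflexivity.
Qed.

(* The hypothesis [1 <= n] excludes [rpow 0 0 = 0 <> 0 ^ 0]. *)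
Lemma rpow_pow_r a n : 0 <= a -> (1 <= n)%nat -> rpow a (INR n) = a ^ n.
Proof.
  intros [Ha | <-] Hn; [rewrite rpow_Rpower by exact Ha; exact (Rpower_pow n a Ha) |].
  rewrite rpow_nonpos_l, pow_i by (lia || lra); reflexivity.
Qed.

Lemma rpow_le_l a b c : 0 <= c -> a <= b -> rpow a c <= rpow b c.
Proof.
  intros Hc Hab; destruct (Rle_dec a 0) as [Ha | Ha].
  - rewrite rpow_nonpos_l by exact Ha; apply rpow_ge_0.
  - rewrite !rpow_Rpower by lra; apply Rle_Rpower_l; lra.
Qed.

Lemma rpow_lt_l a b c : 0 < c -> 0 <= a < b -> rpow a c < rpow b c.
Proof.
  intros Hc [[Ha | <-] Hab].
  - rewrite !rpow_Rpower by lra; apply Rlt_Rpower_l; lra.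
  - rewrite rpow_nonpos_l by lra; apply rpow_gt_0, Hab.
Qed.

Lemma pow_lt_eventually x y :
  0 <= x < 1 -> 0 < y -> exists N, forall n, (N <= n)%nat -> x ^ n < y.
Proof.
  intros Hx Hy.
  destruct (pow_lt_1_zero x ltac:(rewrite Rabs_pos_eq; lra) y Hy) as [N HN].
  exists N; intros n Hn; specialize (HN n Hn).
  rewrite Rabs_pos_eq in HN by (apply pow_le; lra); exact HN.
Qed.

Lemma infinite_sum_term_le a S n :
  (forall k, 0 <= a k) -> infinite_sum a S -> a n <= S.
Proof.
  intros Ha HS; apply Rle_trans with (sum_f_R0 a n).
  - destruct n as [| n]; simpl; [lra |].
    pose proof (cond_pos_sum a n Ha); lra.
  - apply sum_incr; assumption.
Qed.

Lemma infinite_sum_le_geometric a K r :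
  0 <= r < 1 -> (forall n, 0 <= a n <= K * r ^ n) ->
  exists S, infinite_sum a S /\ S <= K / (1 - r).
Proof.
  intros Hr Ha.
  assert (HK : 0 <= K) by (pose proof (Ha 0%nat); simpl in *; lra).
  assert (Hpartial : forall n, sum_f_R0 a n <= K / (1 - r)).
  { intro n; apply Rle_trans with (sum_f_R0 (fun i => r ^ i * K) n).
    - apply sum_Rle; intros i _; rewrite Rmult_comm; apply Ha.
    - rewrite <- scal_sum, tech3 by lra.
      assert (0 <= r ^ S n) by (apply pow_le; lra).
      unfold Rdiv; rewrite <- Rmult_assoc.
      apply Rmult_le_compat_r; [left; apply Rinv_0_lt_compat; lra | nra]. }
  destruct (growing_cv (sum_f_R0 a)) as [S HS].
  - intro n; simpl; pose proof (Ha (S n)); lra.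
  - exists (K / (1 - r)); intros z [n ->]; apply Hpartial.
  - exists S; split; [exact HS |].
    apply (Rle_cv_lim Hpartial HS).
    intros eps Heps; exists 0%nat; intros; rewrite Rdist_eq; exact Heps.
Qed.

Section SequenceSpace.

Variables (X : Type) (d : X -> X -> R).
Hypothesis Hd : is_metric d.

Let dist_ge_0 x y : 0 <= d x y := proj1 Hd x y.

Lemma bounded_seq_dist_bounded x y :
  bounded_seq d x -> bounded_seq d y -> exists B, forall n, d (x n) (y n) <= B.
Proof.
  intros [Mx Hx] [My Hy]; pose proof Hd as [_ [_ [_ Htri]]].
  exists (Mx + d (x 0%nat) (y 0%nat) + My); intros n.
  pose proof (Htri (x n) (x 0%nat) (y n)); pose proof (Htri (x 0%nat) (y 0%nat) (y n)).
  pose proof (Hx n 0%nat); pose proof (Hy 0%nat n); lra.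
Qed.

Lemma dsq_lub_exists q x y :
  0 <= q <= 1 -> bounded_seq d x -> bounded_seq d y ->
  exists s, is_lub (dsq_set d q x y) s.
Proof.
  intros Hq Hx Hy; destruct (bounded_seq_dist_bounded x y Hx Hy) as [B HB].
  destruct (completeness (dsq_set d q x y)) as [s Hs]; [| | exists s; exact Hs].
  - exists B; intros r [n ->].
    assert (q ^ n <= 1) by (rewrite <- (pow1 n); apply pow_incr; lra).
    assert (0 <= q ^ n) by (apply pow_le; lra).
    pose proof (HB n); pose proof (dist_ge_0 (x n) (y n)); nra.
  - exists (q ^ 0 * d (x 0%nat) (y 0%nat)), 0%nat; reflexivity.
Qed.

Lemma dsq_lub_ge_0 q x y s : is_lub (dsq_set d q x y) s -> 0 <= s.
Proof.
  intros [Hub _].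
  specialize (Hub (q ^ 0 * d (x 0%nat) (y 0%nat)) (ex_intro _ 0%nat eq_refl)).
  pose proof (dist_ge_0 (x 0%nat) (y 0%nat)); simpl in Hub; lra.
Qed.

Lemma dsq_lub_le_dpq q1 q p x y s S :
  0 <= q1 -> 0 < p -> rpow q1 p <= q ->
  is_lub (dsq_set d q1 x y) s ->
  infinite_sum (fun n => q ^ n * rpow (d (x n) (y n)) p) S ->
  s <= rpow S (1 / p).
Proof.
  intros Hq1 Hp Hq [_ Hleast] HS; apply Hleast; intros a [n ->].
  assert (Hterm : forall k, 0 <= q ^ k * rpow (d (x k) (y k)) p).
  { intros k; apply Rmult_le_pos; [apply pow_le | apply rpow_ge_0].
    pose proof (rpow_ge_0 q1 p); lra. }
  assert (Ha : 0 <= q1 ^ n * d (x n) (y n)) by (apply Rmult_le_pos; [apply pow_le |]; auto).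
  rewrite <- (rpow_rpow_inv _ p Ha) by lra.
  apply rpow_le_l; [left; apply Rdiv_lt_0_compat; lra |].
  apply Rle_trans with (q ^ n * rpow (d (x n) (y n)) p);
    [| apply (infinite_sum_term_le _ _ n Hterm HS)].
  rewrite rpow_mult_distr, rpow_pow_l by (try apply pow_le; auto).
  apply Rmult_le_compat_r; [apply rpow_ge_0 |].
  apply pow_incr; split; [apply rpow_ge_0 | exact Hq].
Qed.

Lemma dpq_le_dsq q q' p r x y s :
  0 <= q' -> 0 < p -> 0 <= r < 1 -> 0 <= q <= r * rpow q' p ->
  is_lub (dsq_set d q' x y) s ->
  exists S, infinite_sum (fun n => q ^ n * rpow (d (x n) (y n)) p) S /\
    rpow S (1 / p) <= s / rpow (1 - r) (1 / p).
Proof.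
  intros Hq' Hp Hr Hq Hs.
  assert (Hs0 : 0 <= s) by exact (dsq_lub_ge_0 _ _ _ _ Hs).
  destruct (infinite_sum_le_geometric (fun n => q ^ n * rpow (d (x n) (y n)) p)
              (rpow s p) r Hr) as [S [HS HSle]].
  - intros n; split; [apply Rmult_le_pos; [apply pow_le; lra | apply rpow_ge_0] |].
    assert (Hle : q' ^ n * d (x n) (y n) <= s) by (apply Hs; exists n; reflexivity).
    apply Rle_trans with (r ^ n * rpow (q' ^ n * d (x n) (y n)) p).
    + rewrite rpow_mult_distr, rpow_pow_l, <- Rmult_assoc, <- Rpow_mult_distr
        by (try apply pow_le; auto).
      apply Rmult_le_compat_r; [apply rpow_ge_0 | apply pow_incr; lra].
    + rewrite Rmult_comm; apply Rmult_le_compat_r; [apply pow_le; lra |].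
      apply rpow_le_l; lra.
  - exists S; split; [exact HS |].
    rewrite <- (rpow_rpow_inv s p Hs0) by lra.
    rewrite <- rpow_div_distr by (try apply rpow_ge_0; lra).
    apply rpow_le_l; [left; apply Rdiv_lt_0_compat |]; lra.
Qed.

Lemma lip_s_le q f L L' : L <= L' -> lip_s d q f L -> lip_s d q f L'.
Proof.
  intros HL Hf x y Hx Hy s Hs; apply Rle_trans with (L * s); [exact (Hf x y Hx Hy s Hs) |].
  apply Rmult_le_compat_r; [exact (dsq_lub_ge_0 _ _ _ _ Hs) | exact HL].
Qed.

Lemma lip_p_le p q f L L' : L <= L' -> lip_p d p q f L -> lip_p d p q f L'.
Proof.
  intros HL Hf x y Hx Hy S HS; apply Rle_trans with (L * rpow S (1 / p));
    [exact (Hf x y Hx Hy S HS) |].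
  apply Rmult_le_compat_r; [apply rpow_ge_0 | exact HL].
Qed.

Lemma lip_s_lip_p q1 q p f L :
  0 <= q1 <= 1 -> 0 < p -> rpow q1 p <= q -> 0 <= L ->
  lip_s d q1 f L -> lip_p d p q f L.
Proof.
  intros Hq1 Hp Hq HL Hf x y Hx Hy S HS.
  destruct (dsq_lub_exists q1 x y Hq1 Hx Hy) as [s Hs].
  apply Rle_trans with (L * s); [exact (Hf x y Hx Hy s Hs) |].
  apply Rmult_le_compat_l; [exact HL |].
  exact (dsq_lub_le_dpq q1 q p x y s S (proj1 Hq1) Hp Hq Hs HS).
Qed.

Lemma lip_p_lip_s q q' p r f L :
  0 <= q' <= 1 -> 0 < p -> 0 <= r < 1 -> 0 <= q <= r * rpow q' p -> 0 <= L ->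
  lip_p d p q f L -> lip_s d q' f (L / rpow (1 - r) (1 / p)).
Proof.
  intros Hq' Hp Hr Hq HL Hf x y Hx Hy s Hs.
  destruct (dpq_le_dsq q q' p r x y s (proj1 Hq') Hp Hr Hq Hs) as [S [HS HSs]].
  apply Rle_trans with (L * rpow S (1 / p)); [exact (Hf x y Hx Hy S HS) |].
  assert (0 < rpow (1 - r) (1 / p)) by (apply rpow_gt_0; lra).
  replace (L / rpow (1 - r) (1 / p) * s) with (L * (s / rpow (1 - r) (1 / p)))
    by (field; lra).
  apply Rmult_le_compat_l; assumption.
Qed.

End SequenceSpace.

Definition lip_s_lt_1 {X : Type} (d : X -> X -> R) (q : R) (f : (nat -> X) -> X) :=
  exists L, L < 1 /\ lip_s d q f L.

Definition lip_p_lt_root {X : Type} (d : X -> X -> R) (p q : R) (f : (nat -> X) -> X) :=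
  exists L, L < Rpower (1 - q) (1 / p) /\ lip_p d p q f L.

Lemma lip_s_lt_1_lip_p_lt_root X (d : X -> X -> R) (Hd : is_metric d) f q1 :
  0 < q1 < 1 -> lip_s_lt_1 d q1 f ->
  forall q, 0 < q < 1 -> exists p, 1 <= p /\ lip_p_lt_root d p q f.
Proof.
  intros Hq1 [L [HL Hf]] q Hq.
  set (L0 := Rmax L 0).
  assert (HL0 : 0 <= L0 < 1) by (split; [apply Rmax_r | apply Rmax_lub_lt; lra]).
  destruct (pow_lt_eventually q1 q ltac:(lra) ltac:(lra)) as [N1 HN1].
  destruct (pow_lt_eventually L0 (1 - q) HL0 ltac:(lra)) as [N2 HN2].
  set (N := S (Nat.max N1 N2)).
  assert (HN : (1 <= N)%nat) by lia.
  exists (INR N); split; [apply (le_INR 1); exact HN |].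
  exists L0; split.
  - rewrite <- rpow_Rpower by lra.
    rewrite <- (rpow_rpow_inv L0 (INR N)) by (lra || (apply not_0_INR; lia)).
    apply rpow_lt_l; [apply Rdiv_lt_0_compat; [lra | apply lt_0_INR; lia] |].
    rewrite rpow_pow_r by (lra || exact HN).
    split; [apply pow_le; lra | apply HN2; lia].
  - apply (lip_s_lip_p X d Hd q1 q (INR N) f L0); try lra.
    + apply lt_0_INR; lia.
    + rewrite rpow_pow_r by (lra || exact HN); left; apply HN1; lia.
    + apply (lip_s_le X d Hd q1 f L L0 (Rmax_l L 0) Hf).
Qed.

Lemma lip_p_lt_root_lip_s_lt_1 X (d : X -> X -> R) (Hd : is_metric d) f q p :
  0 < q < 1 -> 0 < p -> lip_p_lt_root d p q f ->
  exists q', 0 < q' < 1 /\ lip_s_lt_1 d q' f.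
Proof.
  intros Hq Hp [L [HL Hf]].
  rewrite <- rpow_Rpower in HL by lra.
  set (L0 := Rmax L 0).
  assert (HL0 : 0 <= L0 < rpow (1 - q) (1 / p)).
  { split; [apply Rmax_r | apply Rmax_lub_lt; [exact HL | apply rpow_gt_0; lra]]. }
  set (m := rpow L0 p).
  assert (Hm : 0 <= m < 1 - q).
  { split; [apply rpow_ge_0 |].
    rewrite <- (rpow_inv_rpow (1 - q) p) by lra; apply rpow_lt_l; lra. }
  (* With δ = 1 - q - m: r t = q + (δ/2)(m + δ/2) >= q and 1 - r = m + δ/2 > m. *)
  set (delta := 1 - q - m).
  set (r := q + delta / 2).
  set (t := 1 - delta / 2).
  set (q' := rpow t (1 / p)).
  assert (Ht : rpow q' p = t) by (apply rpow_inv_rpow; unfold t, delta; lra).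
  assert (Hq' : 0 < q' < 1).
  { split; [apply rpow_gt_0; unfold t, delta; lra |].
    rewrite <- (rpow_1_l (1 / p)); apply rpow_lt_l;
      [apply Rdiv_lt_0_compat | unfold t, delta]; lra. }
  assert (HC : L0 < rpow (1 - r) (1 / p)).
  { rewrite <- (rpow_rpow_inv L0 p) by lra; fold m.
    apply rpow_lt_l; [apply Rdiv_lt_0_compat | unfold r, delta]; lra. }
  assert (HC0 : 0 < rpow (1 - r) (1 / p)) by lra.
  exists q'; split; [exact Hq' |].
  exists (L0 / rpow (1 - r) (1 / p)); split.
  - apply (Rmult_lt_reg_r (rpow (1 - r) (1 / p))); [exact HC0 |].
    field_simplify; lra.
  - apply (lip_p_lip_s X d Hd q q' p r f L0); try lra.
    + unfold r, delta; lra.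
    + rewrite Ht; unfold r, t, delta; split; nra.
    + exact (lip_p_le X d p q f L L0 (Rmax_l L 0) Hf).
Qed.

Theorem mainTheorem12 (X : Type) (d : X -> X -> R) (Hd : is_metric d)
  (f : (nat -> X) -> X) :
  ((exists q, 0 < q < 1 /\ exists L, L < 1 /\ lip_s d q f L) <->
   (exists q p, 0 < q < 1 /\ 1 <= p /\
      exists L, L < Rpower (1 - q) (1 / p) /\ lip_p d p q f L)) /\
  ((exists q p, 0 < q < 1 /\ 1 <= p /\
      exists L, L < Rpower (1 - q) (1 / p) /\ lip_p d p q f L) <->
   (forall q, 0 < q < 1 -> exists p, 1 <= p /\
      exists L, L < Rpower (1 - q) (1 / p) /\ lip_p d p q f L)).
Proof.
  split; split.
  - intros [q1 [Hq1 Hf]].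
    destruct (lip_s_lt_1_lip_p_lt_root X d Hd f q1 Hq1 Hf (1 / 2) ltac:(lra))
      as [p [Hp Hfp]].
    exists (1 / 2), p; repeat split; [lra | lra | exact Hp | exact Hfp].
  - intros [q [p [Hq [Hp Hf]]]].
    exact (lip_p_lt_root_lip_s_lt_1 X d Hd f q p Hq ltac:(lra) Hf).
  - intros [q [p [Hq [Hp Hf]]]].
    destruct (lip_p_lt_root_lip_s_lt_1 X d Hd f q p Hq ltac:(lra) Hf) as [q1 [Hq1 Hf1]].
    exact (lip_s_lt_1_lip_p_lt_root X d Hd f q1 Hq1 Hf1).
  - intros Hall; destruct (Hall (1 / 2) ltac:(lra)) as [p [Hp Hf]].
    exists (1 / 2), p; repeat split; [lra | lra | exact Hp | exact Hf].
Qed.
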